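(* Let $\mathbf{G}=(\mathcal{V},\mathcal{E})$ be a strongly connected directed graph on $\mathcal{V}=\{1,\dots,m\}$ with diameter $\delta(\mathbf{G})$. Suppose each node $i$ holds a real input $x_i$ and its identifier $i$, and the Top-$k$ consensus algorithm (described in the context) is run with $T$ rounds, where $T\geq \delta(\mathbf{G})$. Then at termination, for every pair of nodes $i,j\in\mathcal{V}$, $L_i=L_j=(x_{(1)},\dots,x_{(k)})$ and $\ell_i=\ell_j=(I_{(1)},\dots,I_{(k)})$.
   Context: Communication takes place over the directed graph $\mathbf{G}$ in synchronous, reliable rounds; $\mathcal{N}_i^{in}$ is the set of nodes $j$ with $(j,i)\in\mathcal{E}$ and $\mathcal{N}_i^{out}$ the set of nodes $j$ with $(i,j)\in\mathcal{E}$. The diameter $\delta(\mathbf{G})$ is the maximum over ordered pairs of nodes of the length of a shortest directed path between them. Order the input–identifier pairs as $x_{(1)}\ge x_{(2)}\ge\dots\ge x_{(m)}$ with corresponding identifiers $I_{(1)},\dots,I_{(m)}$, where ties are broken in favor of the larger identifier (if $x_{(j)}=x_{(j+1)}$ then $I_{(j)}>I_{(j+1)}$); $k\le m$ is a positive integer. Top-$k$ consensus algorithm: each node $i$ keeps two length-$k$ lists $L_i$ (values) and $\ell_i$ (identifiers), initialized to $L_i=(x_i,\perp,\dots,\perp)$, $\ell_i=(i,\perp,\dots,\perp)$, where $\perp$ denotes an empty entry. In each round $t=1,\dots,T$, every node $i$ sends $(L_i,\ell_i)$ to all out-neighbors, receives $(L_j,\ell_j)$ from all in-neighbors $j\in\mathcal{N}_i^{in}$,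 and replaces $(L_i,\ell_i)$ by the (up to) $k$ largest value–identifier pairs among those in its own lists and the received lists (duplicates of the same pair counted once), sorted in decreasing order of value with ties going to the larger identifier. *)

From HB Require Import structures.
From mathcomp Require Import all_boot all_order all_algebra.
From mathcomp Require Import reals.
Set Implicit Arguments. Unset Strict Implicit. Unset Printing Implicit Defensive.
Import Order.TTheory GRing.Theory Num.Theory.
Local Open Scope ring_scope.

Section TopK.
Variables (R : realType) (m : nat).

(* ---- Graph notions: nodes are 'I_m, directed edge relation e (e j i <-> (j,i) in E) *)

Fixpoint ball (e : rel 'I_m) (n : nat) (i : 'I_m) : {set 'I_m} :=
  if n is n'.+1 then
    ball e n' i :|: [set y | [exists x in ball e n' i, e x y]]
  else [set i].

(* length of a shortest directed path from i to j (m if none exists;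
   when the graph is strongly connected a shortest path has length < m) *)
Definition dist (e : rel 'I_m) (i j : 'I_m) : nat :=
  find (fun n => j \in ball e n i) (iota 0 m).

Definition diameter (e : rel 'I_m) : nat :=
  \max_(i : 'I_m) \max_(j : 'I_m) dist e i j.

Definition strongly_connected (e : rel 'I_m) : Prop :=
  forall i j : 'I_m, connect e i j.

Definition before (p q : R * 'I_m) : bool :=
  (q.1 < p.1) || ((p.1 == q.1) && (q.2 <= p.2)%N).

Definition init_state (x : 'I_m -> R) (i : 'I_m) : seq (R * 'I_m) :=
  [:: (x i, i)].

Definition round (k : nat) (e : rel 'I_m) (s : 'I_m -> seq (R * 'I_m))
    (i : 'I_m) : seq (R * 'I_m) :=
  take k (sort before
    (undup (s i ++ flatten [seq s j | j <- enum 'I_m & e j i]))).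

Definition run (k : nat) (e : rel 'I_m) (x : 'I_m -> R) (T : nat) :
    'I_m -> seq (R * 'I_m) :=
  iter T (round k e) (init_state x).

(* the length-k lists L_i (values) and l_i (identifiers); None is the empty entry ⊥ *)
Definition Lvals (k : nat) (s : seq (R * 'I_m)) : seq (option R) :=
  [seq omap fst (ohead (drop t s)) | t <- iota 0 k].
Definition Lids (k : nat) (s : seq (R * 'I_m)) : seq (option 'I_m) :=
  [seq omap snd (ohead (drop t s)) | t <- iota 0 k].

Definition ordered_pairs (x : 'I_m -> R) : seq (R * 'I_m) :=
  sort before [seq (x i, i) | i <- enum 'I_m].

End TopK.

From HB Require Import structures.
From mathcomp Require Import all_boot all_order all_algebra.
From mathcomp Require Import reals.
Import Order.TTheory GRing.Theory Num.Theory.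
Set Implicit Arguments. Unset Strict Implicit. Unset Printing Implicit Defensive.

(* The k best elements of a multiset, topk, satisfy topk (topk A ++ B) =
   topk (A ++ B): an element among the k best of A ++ B that lies in A is a
   fortiori among the k best of A.  Hence, by induction on t, after t rounds
   node i holds topk of the pairs of all nodes that reach i by a path of
   length <= t.  Once t is at least the diameter, every node reaches every
   other one, so all nodes hold the k best pairs of the whole network. *)

Section TopK.
Variables (T : eqType) (r : rel T).
Hypotheses (r_total : total r) (r_trans : transitive r) (r_anti : antisymmetric r).

Definition strict (p q : T) : bool := r p q && (p != q).

Lemma strict_irr : irreflexive strict.
Proof. by move=> p; rewrite /strict eqxx andbF. Qed.

Lemma strict_trans_r p q s : strict p q -> r q s -> strict p s.
Proof.
move=> /andP[rpq npq] rqs; rewrite /strict (r_trans rpq rqs) /=.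
apply: contra npq => /eqP eps; rewrite eps in rpq *.
by apply/eqP/r_anti; rewrite rpq rqs.
Qed.

Lemma strict_trans : transitive strict.
Proof. by move=> q p s spq /andP[rqs _]; apply: strict_trans_r spq rqs. Qed.

Lemma r_nstrict p q : ~~ strict q p -> r p q.
Proof.
rewrite /strict negb_and negbK => /orP[nrqp | /eqP->]; last by rewrite -[r _ _]orbb r_total.
by case/orP: (r_total p q) => //; rewrite (negbTE nrqp).
Qed.

Lemma sorted_strict s : uniq s -> sorted r s -> sorted strict s.
Proof.
elim: s => // a [//|b s] IH /= /andP[na us] /andP[rab pbs].
move/(_ us pbs): IH => /= ->; rewrite andbT /strict rab /=.
by apply: contra na => /eqP->; rewrite inE eqxx.
Qed.

Lemma index_sorted_strict s y :
  sorted strict s -> y \in s -> index y s = count (strict^~ y) s.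
Proof.
elim: s => // a s IH ps; have ss := path_sorted ps.
have a_min : all (strict a) s by apply: order_path_min ps; apply: strict_trans.
rewrite inE /=; have [-> _|nya ys] := eqVneq y a.
  rewrite strict_irr add0n; apply/esym/eqP; rewrite -leqn0 leqNgt -has_count.
  apply/hasPn=> z zs; apply: contraT; rewrite negbK => sza.
  by move/allP/(_ z zs): a_min => /(strict_trans sza); rewrite strict_irr.
by move/allP/(_ y ys): a_min => ->; rewrite IH.
Qed.

Variable k : nat.

Definition topk (U : seq T) : seq T := take k (sort r (undup U)).

Definition rank (U : seq T) (y : T) : nat := count (strict^~ y) (undup U).

Lemma sort_undup_sorted U : sorted strict (sort r (undup U)).
Proof.
by apply: sorted_strict; rewrite ?sort_uniq ?undup_uniq ?sort_sorted.
Qed.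

Lemma topk_sorted U : sorted strict (topk U).
Proof. exact: subseq_sorted strict_trans _ _ (take_subseq _ _) (sort_undup_sorted U). Qed.

Lemma mem_topk U y : (y \in topk U) = (y \in U) && (rank U y < k).
Proof.
have yU_sort : (y \in sort r (undup U)) = (y \in U) by rewrite mem_sort mem_undup.
have [yU | nyU] := boolP (y \in U); last first.
  by apply/negbTE; apply: contra nyU => /mem_take; rewrite yU_sort.
rewrite /topk in_take ?yU_sort // index_sorted_strict ?sort_undup_sorted ?yU_sort //.
by rewrite /rank (permP (permEl (perm_sort _ _))).
Qed.

Lemma topk_subset U : {subset topk U <= U}.
Proof. by move=> z; rewrite mem_topk => /andP[]. Qed.

Lemma eq_topk A B : A =i B -> topk A = topk B.
Proof.
move=> eqAB; rewrite /topk; congr (take k _); apply/perm_sortP => //.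
by apply: uniq_perm; rewrite ?undup_uniq // => z; rewrite !mem_undup.
Qed.

Lemma rank_subset A B y : {subset A <= B} -> rank A y <= rank B y.
Proof.
move=> sAB; rewrite /rank -!size_filter; apply: uniq_leq_size.
  by rewrite filter_uniq ?undup_uniq.
by move=> z; rewrite !mem_filter !mem_undup => /andP[-> /sAB].
Qed.

Lemma rank_mono U y w : r y w -> rank U y <= rank U w.
Proof. by move=> ryw; apply: sub_count => z /= szy; apply: strict_trans_r szy ryw. Qed.

Lemma rank_topk_cat A B y : rank A y < k -> rank (topk A ++ B) y = rank (A ++ B) y.
Proof.
move=> rAy; rewrite /rank -!size_filter; apply/perm_size/uniq_perm;
  rewrite ?filter_uniq ?undup_uniq // => z.
rewrite !mem_filter !mem_undup !mem_cat; case szy: (strict z y) => //=.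
by rewrite mem_topk (leq_ltn_trans (rank_mono _ (andP szy).1) rAy) andbT.
Qed.

Lemma rank_topk_cat_ge A B y : k <= rank A y -> k <= rank (topk A ++ B) y.
Proof.
move=> rAy; have size_topk : size (topk A) = k.
  by rewrite size_takel // size_sort (leq_trans rAy) ?count_size.
rewrite -{1}size_topk /rank -size_filter; apply: uniq_leq_size.
  by rewrite take_uniq ?sort_uniq ?undup_uniq.
move=> w wA; rewrite mem_filter mem_undup mem_cat wA andbT.
apply: contraT => /r_nstrict ryw; move: wA; rewrite mem_topk => /andP[_].
by rewrite ltnNge (leq_trans rAy (rank_mono A ryw)).
Qed.

Lemma topk_catl A B : topk (topk A ++ B) = topk (A ++ B).
Proof.
apply: (irr_sorted_eq strict_trans strict_irr) => [||y]; rewrite ?topk_sorted //.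
rewrite !mem_topk; have [rAy | rAy] := ltnP (rank A y) k.
  by rewrite rank_topk_cat // !mem_cat mem_topk rAy andbT.
rewrite !ltnNge rank_topk_cat_ge // (leq_trans rAy) ?andbF //.
by apply: rank_subset => z; rewrite mem_cat => ->.
Qed.

Lemma topk_catr A B : topk (A ++ topk B) = topk (A ++ B).
Proof.
have catC (C D : seq T) : C ++ D =i D ++ C by move=> z; rewrite !mem_cat orbC.
by rewrite (eq_topk (catC _ _)) topk_catl (eq_topk (catC _ _)).
Qed.

Lemma topk_flatten (I : Type) (f : I -> seq T) (js : seq I) :
  topk (flatten [seq topk (f j) | j <- js]) = topk (flatten [seq f j | j <- js]).
Proof. by elim: js => //= j js IH; rewrite topk_catl -topk_catr IH topk_catr. Qed.

End TopK.

Section Network.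
Variables (m : nat) (e : rel 'I_m).

Lemma ball_monotone n d j : ball e n j \subset ball e (n + d) j.
Proof.
elim: d => [|d IH]; first by rewrite addn0.
by rewrite addnS (subset_trans IH) //= subsetUl.
Qed.

Lemma path_ball j p : path e j p -> last j p \in ball e (size p) j.
Proof.
elim/last_ind: p => [|p z IH]; first by rewrite /= in_set1.
rewrite rcons_path last_rcons size_rcons => /andP[pp ez].
by rewrite /= in_setU in_set; apply/orP; right; apply/existsP; exists (last j p); rewrite IH.
Qed.

Lemma ball_dist j i : connect e j i -> i \in ball e (dist e j i) j.
Proof.
move=> /connectP[p pth ->]; case/shortenP: pth => q pq uq _.
have has_ball : has (fun n => last j q \in ball e n j) (iota 0 m).
  apply/hasP; exists (size q); last exact: path_ball.
  rewrite mem_iota /=; have := uniq_leq_size uq (fun z _ => mem_enum 'I_m z).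
  by rewrite size_enum_ord.
have := nth_find 0 has_ball; rewrite nth_iota //.
by move: has_ball; rewrite has_find size_iota.
Qed.

Lemma dist_le_diameter j i : dist e j i <= diameter e.
Proof. exact: leq_trans (leq_bigmax i) (leq_bigmax (F := fun j => \max_i dist e j i) j). Qed.

Lemma ball_diameter n j i : strongly_connected e -> diameter e <= n -> i \in ball e n j.
Proof.
move=> sc dn; have /subnKC <- := leq_trans (dist_le_diameter j i) dn.
exact: subsetP (ball_monotone _ _ _) _ (ball_dist (sc j i)).
Qed.

Variables (R : realType) (x : 'I_m -> R) (k : nat).

Lemma before_total : total (@before R m).
Proof.
move=> p q; rewrite /before.
by case: (ltgtP q.1 p.1) => //= _; rewrite ?orbT // leq_total.
Qed.

Lemma before_trans : transitive (@before R m).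
Proof.
move=> q p s; rewrite /before.
case/orP=> [h1|/andP[/eqP e1 h1]]; case/orP=> [h2|/andP[/eqP e2 h2]].
- by rewrite (lt_trans h2 h1).
- by rewrite -e2 h1.
- by rewrite e1 h2.
- by rewrite e1 e2 eqxx (leq_trans h2 h1) orbT.
Qed.

Lemma before_anti : antisymmetric (@before R m).
Proof.
case=> [a i] [b j]; rewrite /before /=.
case/andP; case/orP=> [h1|/andP[/eqP e1 h1]]; case/orP=> [h2|/andP[/eqP e2 h2]].
- by move: (lt_trans h1 h2); rewrite ltxx.
- by move: h1; rewrite e2 ltxx.
- by move: h2; rewrite e1 ltxx.
- by rewrite e1; congr (_, _); apply: val_inj; apply/eqP; rewrite eqn_leq h1 h2.
Qed.

Local Notation topk := (topk (@before R m) k).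

Definition received (t : nat) (i : 'I_m) : seq (R * 'I_m) :=
  [seq (x j, j) | j <- enum 'I_m & i \in ball e t j].

Lemma mem_received t i z :
  (z \in received t i) = (z == (x z.2, z.2)) && (i \in ball e t z.2).
Proof.
apply/mapP/andP => [[j]|[/eqP -> bz]].
  by rewrite mem_filter => /andP[bj _] ->; rewrite /= eqxx.
by exists z.2; rewrite // mem_filter mem_enum bz.
Qed.

Lemma received0 i : received 0 i =i [:: (x i, i)].
Proof.
case=> a j; rewrite mem_received /= in_set1 inE !xpair_eqE /= eqxx andbT.
by have [->|_] := eqVneq i j; rewrite ?andbT ?andbF.
Qed.

Lemma receivedS t i :
  flatten [seq received t j | j <- i :: [seq j <- enum 'I_m | e j i]] =i received t.+1 i.
Proof.
move=> z; rewrite /= mem_cat !mem_received /= in_setU in_set.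
have [ez | nez] /= := boolP (z == (x z.2, z.2)); last first.
  by apply/negP => /flatten_mapP[j _]; rewrite mem_received (negbTE nez).
congr (_ || _); apply/flatten_mapP/existsP => [[j]|[j /andP[jb eji]]].
  by rewrite mem_filter mem_enum andbT mem_received ez => eji /= jb; exists j; rewrite jb eji.
by exists j; [rewrite mem_filter mem_enum eji | rewrite mem_received ez jb].
Qed.

Lemma run_topk t i : 0 < k -> run k e x t i = topk (received t i).
Proof.
have eq_topk_before := eq_topk before_total before_trans before_anti k.
move=> k_gt0; elim: t i => [|t IH] i.
  by rewrite (eq_topk_before _ _ (received0 i)) /topk /=; case: k k_gt0.
change (topk (flatten [seq run k e x t j | j <- i :: [seq j <- enum 'I_m | e j i]])
  = topk (received t.+1 i)).
rewrite (eq_map IH) (topk_flatten before_total before_trans before_anti).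
exact: eq_topk_before (receivedS t i).
Qed.

Lemma received_complete t i :
  strongly_connected e -> diameter e <= t -> received t i = [seq (x j, j) | j <- enum 'I_m].
Proof.
move=> sc dt; rewrite /received (@eq_filter _ _ predT) ?filter_predT // => j.
exact: ball_diameter.
Qed.

Lemma run_consensus T i : strongly_connected e -> 0 < k -> diameter e <= T ->
  run k e x T i = take k (ordered_pairs x).
Proof.
move=> sc k_gt0 dT; rewrite run_topk // received_complete // /topk undup_id //.
by rewrite map_inj_uniq ?enum_uniq // => j1 j2 [].
Qed.

End Network.

Lemma map_ohead_drop (A B : Type) (f : A -> B) (s : seq A) :
  [seq omap f (ohead (drop t s)) | t <- iota 0 (size s)] = [seq Some (f p) | p <- s].
Proof.
elim: s => //= a s IH; congr (_ :: _).
by rewrite -IH -[1%N]addn0 iotaDl -map_comp.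
Qed.

Theorem theorem1 (R : realType) (m : nat) (e : rel 'I_m) (x : 'I_m -> R)
    (k T : nat) :
  strongly_connected e ->
  (0 < k)%N -> (k <= m)%N ->
  (diameter e <= T)%N ->
  forall i j : 'I_m,
    let s := run k e x T in
    [/\ Lvals k (s i) = Lvals k (s j),
        Lvals k (s i) = [seq Some p.1 | p <- take k (ordered_pairs x)],
        Lids k (s i) = Lids k (s j)
      & Lids k (s i) = [seq Some p.2 | p <- take k (ordered_pairs x)]].
Proof.
move=> sc k_gt0 km dT i j s; rewrite /s !run_consensus //.
have size_top : size (take k (ordered_pairs x)) = k.
  by rewrite size_takel // size_sort size_map size_enum_ord.
by rewrite /Lvals /Lids -[in iota 0 k]size_top !map_ohead_drop.
Qed.
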